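(* Let $I(\gamma)$ be the ideal of $S^G$ generated by $\{P_\iota:\iota\in U_\#(\gamma)\}$. Then the closed subvariety $\mathcal{V}(I(\gamma))$ of $V/G$ defined by $I(\gamma)$ equals the fixed-point set $(V/G)^\gamma$.
   Context: Let $K$ be an algebraically closed field of characteristic $0$, $V$ an $r$-dimensional $K$-vector space and $G\subset\mathrm{GL}(V)$ a finite group generated by (pseudo)reflections. Let $S$ be the graded algebra of polynomial functions on $V$, with $\mathrm{GL}(V)$ acting by $(gf)(v)=f(g^{-1}v)$; $V/G$ is the quotient variety, with coordinate ring $S^G$, on which $\gamma$ acts. Fix a semisimple $\gamma\in\mathrm{GL}(V)$ normalising $G$. There is a set $\{P_\iota:\iota\in\mathcal{B}(\gamma)\}$ of $r$ homogeneous algebraically independent generators of $S^G$ (basic invariants), indexed by a finite set $\mathcal{B}(\gamma)$, with $\gamma(P_\iota)=\varepsilon_\iota P_\iota$ for scalars $\varepsilon_\iota\in K^\times$; let $U_\#(\gamma)=\{\iota\in\mathcal{B}(\gamma):\varepsilon_\iota\neq 1\}$. *)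

From HB Require Import structures.
From mathcomp Require Import all_boot all_order all_algebra all_fingroup.
From mathcomp Require Import mxrepresentation.
From mathcomp Require Import mpoly.
Set Implicit Arguments. Unset Strict Implicit. Unset Printing Implicit Defensive.
Import GRing.Theory.
Local Open Scope ring_scope.

Section Defs.
Variables (K : fieldType) (r : nat).

(* substitution X_i |-> sum_j A i j X_j, i.e. f |-> (v |-> f (A v)) *)
Definition lin_subst (A : 'M[K]_r) : r.-tuple {mpoly K[r]} :=
  [tuple \sum_(j < r) A i j *: 'X_j | i < r].

(* action of GL(V) on S = K[V]: (g f)(v) = f (g^-1 v) *)
Definition polyact (g : 'M[K]_r) (f : {mpoly K[r]}) : {mpoly K[r]} :=
  f \mPo lin_subst (invmx g).

(* (pseudo)reflection: an invertible map fixing a hyperplane pointwise, != 1 *)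
Definition pseudoreflection (A : 'M[K]_r) : bool := \rank (A - 1%:M) == 1%N.

Variables (gT : finGroupType) (G : {group gT}) (rG : mx_representation K G r).

Definition invariantG (f : {mpoly K[r]}) : Prop :=
  forall x, x \in G -> polyact (rG x) f = f.

(* a K-point of V/G = Spec S^G : a K-algebra homomorphism S^G -> K
   (only its values on S^G are relevant) *)
Definition quot_point (phi : {mpoly K[r]} -> K) : Prop :=
  [/\ forall f g, invariantG f -> invariantG g -> phi (f + g) = phi f + phi g,
      forall f g, invariantG f -> invariantG g -> phi (f * g) = phi f * phi g
    & forall c : K, phi c%:MP = c].

(* the point gamma . phi of V/G is phi o gamma^{-1} (pullback); fixed points *)
Definition fixed_quot_point (gamma : 'M[K]_r) (phi : {mpoly K[r]} -> K) : Prop :=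
  forall f, invariantG f -> phi (polyact (invmx gamma) f) = phi f.

Definition in_ideal_gen (P : 'I_r -> {mpoly K[r]}) (U : pred 'I_r)
  (f : {mpoly K[r]}) : Prop :=
  exists h : 'I_r -> {mpoly K[r]},
    (forall i, invariantG (h i)) /\ f = \sum_(i < r | U i) h i * P i.

Definition in_zero_locus (P : 'I_r -> {mpoly K[r]}) (U : pred 'I_r)
  (phi : {mpoly K[r]} -> K) : Prop :=
  forall f, in_ideal_gen P U f -> phi f = 0.

End Defs.

From HB Require Import structures.
From mathcomp Require Import all_boot all_order all_algebra all_fingroup.
From mathcomp Require Import mxrepresentation mxred.
From mathcomp Require Import mpoly.
Set Implicit Arguments. Unset Strict Implicit. Unset Printing Implicit Defensive.
Import GRing.Theory.
Local Open Scope ring_scope.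

(* Write every invariant as f = Q(P).  Then gamma^-1 f = Q(eps^-1 P), and since
   eps_i^-1 P_i - P_i is either 0 or a multiple of a generator of I(gamma),
   gamma^-1 f and f are congruent modulo I(gamma); hence a point of V(I(gamma))
   takes the same value on both.  Conversely, a fixed point phi satisfies
   phi(P_i) = eps_i^-1 phi(P_i), so phi(P_i) = 0 whenever eps_i <> 1. *)

Section LinearSubstitution.
Variables (K : fieldType) (n : nat).

Lemma comp_mpolyA (p : {mpoly K[n]}) (lq lr : n.-tuple {mpoly K[n]}) :
  (p \mPo lq) \mPo lr = p \mPo [tuple tnth lq i \mPo lr | i < n].
Proof.
rewrite [p \mPo lq]comp_mpolyE [p \mPo _]comp_mpolyE raddf_sum /=.
apply: eq_bigr => m _; rewrite comp_mpolyZ rmorph_prod /=; congr (_ *: _).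
by apply: eq_bigr => i _; rewrite rmorphXn /= tnth_mktuple.
Qed.

Lemma lin_substM (A B : 'M[K]_n) :
  [tuple tnth (lin_subst A) i \mPo lin_subst B | i < n] = lin_subst (A *m B).
Proof.
apply: eq_from_tnth => i; rewrite !tnth_mktuple raddf_sum /=.
under eq_bigr => j _ do
  rewrite comp_mpolyZ comp_mpolyXU -tnth_nth tnth_mktuple scaler_sumr.
rewrite exchange_big /=; apply: eq_bigr => k _.
by rewrite mxE scaler_suml; apply: eq_bigr => j _; rewrite scalerA.
Qed.

Lemma lin_subst1 : lin_subst (1%:M : 'M[K]_n) = [tuple 'X_i | i < n].
Proof.
apply: eq_from_tnth => i; rewrite !tnth_mktuple (bigD1 i) //= big1 ?addr0.
  by rewrite mxE eqxx scale1r.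
by move=> j /negPf ji; rewrite mxE eq_sym ji scale0r.
Qed.

Lemma polyact_comp (g : 'M[K]_n) (Q : {mpoly K[n]}) (t : n.-tuple {mpoly K[n]}) :
  polyact g (Q \mPo t) = Q \mPo [tuple polyact g (tnth t i) | i < n].
Proof. exact: comp_mpolyA. Qed.

Lemma polyactK (g : 'M[K]_n) (f : {mpoly K[n]}) : g \in unitmx ->
  polyact (invmx g) (polyact g f) = f.
Proof.
move=> g_unit; rewrite /polyact comp_mpolyA lin_substM invmxK mulVmx //.
by rewrite lin_subst1 comp_mpoly_id.
Qed.

Lemma polyact_inv_eigen (g : 'M[K]_n) (f : {mpoly K[n]}) (c : K) :
  g \in unitmx -> c != 0 -> polyact g f = c *: f ->
  polyact (invmx g) f = c^-1 *: f.
Proof.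
move=> g_unit c_neq0 gf; have := congr1 (polyact (invmx g)) gf.
rewrite polyactK // /polyact comp_mpolyZ => {2}->.
by rewrite scalerA mulVf // scale1r.
Qed.

End LinearSubstitution.

Section Invariants.
Variables (K : fieldType) (r : nat) (gT : finGroupType) (G : {group gT}).
Variable rG : mx_representation K G r.
Local Notation invariant := (invariantG rG).

Lemma invariantGC (c : K) : invariant c%:MP.
Proof. by move=> x _; rewrite /polyact comp_mpolyC. Qed.

Lemma invariantG0 : invariant 0.
Proof. by rewrite -mpolyC0; apply: invariantGC. Qed.

Lemma invariantGD f g : invariant f -> invariant g -> invariant (f + g).
Proof. by move=> fI gI x xG; rewrite /polyact comp_mpolyD -!/(polyact _ _) fI ?gI. Qed.

Lemma invariantGB f g : invariant f -> invariant g -> invariant (f - g).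
Proof. by move=> fI gI x xG; rewrite /polyact comp_mpolyB -!/(polyact _ _) fI ?gI. Qed.

Lemma invariantGM f g : invariant f -> invariant g -> invariant (f * g).
Proof. by move=> fI gI x xG; rewrite /polyact rmorphM /= -!/(polyact _ _) fI ?gI. Qed.

Lemma invariantGZ (c : K) f : invariant f -> invariant (c *: f).
Proof. by rewrite -mul_mpolyC; apply/invariantGM/invariantGC. Qed.

Lemma quot_point0 phi : quot_point rG phi -> phi 0 = 0.
Proof. by case=> _ _ phiC; rewrite -mpolyC0 phiC. Qed.

Lemma quot_pointZ phi (c : K) f :
  quot_point rG phi -> invariant f -> phi (c *: f) = c * phi f.
Proof.
case=> _ phiM phiC fI; rewrite -mul_mpolyC phiM ?phiC //; exact: invariantGC.
Qed.

Variables (P : 'I_r -> {mpoly K[r]}) (U : pred 'I_r).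
Local Notation in_ideal := (in_ideal_gen rG P U).

Lemma in_ideal_gen0 : in_ideal 0.
Proof.
exists (fun=> 0); split=> [i|]; first exact: invariantG0.
by rewrite big1 // => i _; rewrite mul0r.
Qed.

Lemma in_ideal_genD f g : in_ideal f -> in_ideal g -> in_ideal (f + g).
Proof.
move=> [h [hI ->]] [h' [h'I ->]]; exists (fun i => h i + h' i); split.
  by move=> i; apply: invariantGD.
by rewrite -big_split; apply: eq_bigr => i _; rewrite mulrDl.
Qed.

Lemma in_ideal_genM a f : invariant a -> in_ideal f -> in_ideal (a * f).
Proof.
move=> aI [h [hI ->]]; exists (fun i => a * h i); split.
  by move=> i; apply: invariantGM.
by rewrite mulr_sumr; apply: eq_bigr => i _; rewrite mulrA.
Qed.

Lemma in_ideal_gen_generator i : U i -> in_ideal (P i).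
Proof.
move=> Ui; exists (fun j => (j == i)%:R); split=> [j|].
  by case: (j == i); rewrite ?mpolyC_nat; apply: invariantGC.
rewrite (bigD1 i) //= eqxx mul1r big1 ?addr0 // => j /andP[_ /negPf->].
by rewrite mul0r.
Qed.

Lemma zero_locus_generators phi :
  quot_point rG phi -> (forall i, invariant (P i)) ->
  (forall i, U i -> phi (P i) = 0) -> in_zero_locus rG P U phi.
Proof.
move=> phi_pt PI phiP f [h [hI ->]].
have [phiD phiM _] := phi_pt.
suff [] : invariant (\sum_(i < r | U i) h i * P i) /\
          phi (\sum_(i < r | U i) h i * P i) = 0 by [].
apply: (big_ind (fun x => invariant x /\ phi x = 0)).
- by split; [apply: invariantG0 | apply: quot_point0].
- move=> x y [xI phix] [yI phiy].
  by split; [apply: invariantGD | rewrite phiD // phix phiy addr0].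
- move=> i Ui; split; first exact: invariantGM.
  by rewrite phiM // phiP // mulr0.
Qed.

Definition inv_eqmod (a b : {mpoly K[r]}) : Prop :=
  [/\ invariant a, invariant b & in_ideal (a - b)].

Lemma inv_eqmod_refl a : invariant a -> inv_eqmod a a.
Proof. by move=> aI; split; rewrite // subrr; apply: in_ideal_gen0. Qed.

Lemma inv_eqmodD a a' b b' :
  inv_eqmod a a' -> inv_eqmod b b' -> inv_eqmod (a + b) (a' + b').
Proof.
move=> [aI a'I aa'] [bI b'I bb']; split; try exact: invariantGD.
by rewrite opprD addrACA; apply: in_ideal_genD.
Qed.

Lemma inv_eqmodM a a' b b' :
  inv_eqmod a a' -> inv_eqmod b b' -> inv_eqmod (a * b) (a' * b').
Proof.
move=> [aI a'I aa'] [bI b'I bb']; split; try exact: invariantGM.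
have -> : a * b - a' * b' = a * (b - b') + b' * (a - a').
  by rewrite !mulrBr [b' * a]mulrC [b' * a']mulrC addrA subrK.
by apply: in_ideal_genD; apply: in_ideal_genM.
Qed.

Lemma inv_eqmodXn a a' k : inv_eqmod a a' -> inv_eqmod (a ^+ k) (a' ^+ k).
Proof.
move=> aa'; elim: k => [|k IHk]; last by rewrite !exprS; apply: inv_eqmodM.
by rewrite !expr0 -mpolyC1; apply/inv_eqmod_refl/invariantGC.
Qed.

Lemma inv_eqmod_comp (Q : {mpoly K[r]}) (t t' : r.-tuple {mpoly K[r]}) :
  (forall i, inv_eqmod (tnth t i) (tnth t' i)) -> inv_eqmod (Q \mPo t) (Q \mPo t').
Proof.
move=> tt'; rewrite !comp_mpolyE.
apply: big_ind2 => [|x x' y y'|m _]; first exact/inv_eqmod_refl/invariantG0.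
  exact: inv_eqmodD.
rewrite -!mul_mpolyC; apply: inv_eqmodM; first exact/inv_eqmod_refl/invariantGC.
apply: big_ind2 => [|x x' y y'|i _]; last exact: inv_eqmodXn.
  by rewrite -mpolyC1; apply/inv_eqmod_refl/invariantGC.
exact: inv_eqmodM.
Qed.

Lemma inv_eqmod_eigen_generator i (c : K) :
  (c != 1 -> U i) -> invariant (P i) -> inv_eqmod (c *: P i) (P i).
Proof.
move=> UC PI; split; [exact: invariantGZ | by [] |].
rewrite -{2}(scale1r (P i)) -scalerBl -mul_mpolyC.
have [->|c_neq1] := eqVneq c 1.
  by rewrite subrr mpolyC0 mul0r; apply: in_ideal_gen0.
by apply: in_ideal_genM; [apply: invariantGC | apply/in_ideal_gen_generator/UC].
Qed.

Lemma zero_locus_eqmod phi a b :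
  quot_point rG phi -> in_zero_locus rG P U phi -> inv_eqmod a b -> phi a = phi b.
Proof.
move=> [phiD _ _] phiI [aI bI ab].
by rewrite -[a](subrK b) phiD ?(phiI _ ab) ?add0r //; apply: invariantGB.
Qed.

End Invariants.

Theorem lemma5p1 (K : closedFieldType) (r : nat)
  (gT : finGroupType) (G : {group gT}) (rG : mx_representation K G r)
  (gamma : 'M[K]_r) (P : 'I_r -> {mpoly K[r]}) (eps : 'I_r -> K) :
  [pchar K] =i pred0 ->
  mx_faithful rG ->
  G :=: <<[set x in G | pseudoreflection (rG x)]>>%g ->
  gamma \in unitmx ->
  diagonalizable gamma ->
  (forall x, x \in G -> exists2 y, y \in G &
      gamma *m rG x *m invmx gamma = rG y) ->
  (forall i, exists d, P i \is d.-homog) ->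
  (forall i, invariantG rG (P i)) ->
  (forall Q : {mpoly K[r]}, Q \mPo [tuple P i | i < r] = 0 -> Q = 0) ->
  (forall f, invariantG rG f -> exists Q : {mpoly K[r]}, f = Q \mPo [tuple P i | i < r]) ->
  (forall i, eps i != 0) ->
  (forall i, polyact gamma (P i) = eps i *: P i) ->
  forall phi : {mpoly K[r]} -> K, quot_point rG phi ->
    (in_zero_locus rG P [pred i | eps i != 1] phi <-> fixed_quot_point rG gamma phi).
Proof.
move=> _ _ _ gamma_unit _ _ _ PI _ P_gen eps_neq0 P_eigen phi phi_pt.
have Pinv_eigen i : polyact (invmx gamma) (P i) = (eps i)^-1 *: P i.
  exact: polyact_inv_eigen.
split=> [phiI f fI | phi_fixed].
  apply: (zero_locus_eqmod phi_pt phiI); have [Q ->] := P_gen f fI.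
  rewrite polyact_comp; apply: inv_eqmod_comp => i; rewrite !tnth_mktuple.
  rewrite Pinv_eigen; apply: inv_eqmod_eigen_generator => //=.
  by apply: contra => /eqP->; rewrite invr1.
apply: zero_locus_generators => // i /= eps_neq1.
have := phi_fixed _ (PI i); rewrite Pinv_eigen (quot_pointZ _ phi_pt (PI i)) => /eqP.
rewrite -subr_eq0 -{2}[phi (P i)]mul1r -mulrBl mulf_eq0 subr_eq0 invr_eq1.
by rewrite (negPf eps_neq1) => /eqP.
Qed.
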